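(* Suppose the Drift Assumption holds and let $1<p\le2$. Define $\Psi(x)=\Phi(x)^{p/2}$. Then $\Psi$ is differentiable (with $\nabla\Psi(0)=0$), and there exist constants $\eta_p,L_p>0$ such that, with $a_1=c_1^{p/2}$, $a_2=c_2^{p/2}$, for all $x,y\in\mathbb{R}^d$: (1) $a_1\|x-x^\star\|^p\le\Psi(x-x^\star)\le a_2\|x-x^\star\|^p$; (2) $\langle\nabla\Psi(x-x^\star),H(x)-x\rangle\le-\eta_p\Psi(x-x^\star)$ (one can take $\eta_p=\tfrac p2\eta$); (3) $\Psi(x)\le\Psi(y)+\langle\nabla\Psi(y),x-y\rangle+\frac{L_p}{p}\|x-y\|^p$.
   Context: Let $\|\cdot\|$ denote the Euclidean norm on $\mathbb{R}^d$ and $\langle\cdot,\cdot\rangle$ the Euclidean inner product; $H:\mathbb{R}^d\to\mathbb{R}^d$. Drift Assumption: there is $x^\star\in\mathbb{R}^d$ with $H(x^\star)=x^\star$, a differentiable function $\Phi:\mathbb{R}^d\to[0,\infty)$ and constants $\eta,c_1,c_2,L_2>0$ such that (i) $\langle\nabla\Phi(x-x^\star),H(x)-x\rangle\le-\eta\,\Phi(x-x^\star)$ for all $x\in\mathbb{R}^d$; (ii) $\Phi(y)\le\Phi(x)+\langle\nabla\Phi(x),y-x\rangle+\frac{L_2}{2}\|y-x\|^2$ for all $x,y\in\mathbb{R}^d$; (iii) $c_1\|x-x^\star\|^2\le\Phi(x-x^\star)\le c_2\|x-x^\star\|^2$ for all $x\in\mathbb{R}^d$. *)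

(* R^d is modelled as row vectors 'rV[R]_d. *)
From HB Require Import structures.
From mathcomp Require Import all_boot all_order all_algebra.
From mathcomp Require Import all_classical all_reals all_analysis.
Set Implicit Arguments. Unset Strict Implicit. Unset Printing Implicit Defensive.
Import Order.TTheory GRing.Theory Num.Theory.
Import numFieldNormedType.Exports.
Local Open Scope ring_scope.

Definition dotp (R : realType) (d : nat) (u v : 'rV[R]_d) : R :=
  \sum_(i < d) u ord0 i * v ord0 i.

Definition enorm (R : realType) (d : nat) (u : 'rV[R]_d) : R :=
  Num.sqrt (dotp u u).

Definition grad (R : realType) (d : nat) (f : 'rV[R]_d -> R) (x : 'rV[R]_d)
  : 'rV[R]_d := \row_(i < d) ('d f x (delta_mx ord0 i : 'rV[R]_d)).

From HB Require Import structures.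
From mathcomp Require Import all_boot all_order all_algebra.
From mathcomp Require Import all_classical all_reals all_analysis.
From mathcomp Require Import ring lra.

Set Implicit Arguments.
Unset Strict Implicit.
Unset Printing Implicit Defensive.

Import Order.TTheory GRing.Theory Num.Theory.
Import numFieldNormedType.Exports.
Local Open Scope ring_scope.

(* Write Psi = Phi ^ q with q = p / 2 in (1/2, 1].  Away from the minimiser Psi
   is differentiable by the chain rule, with grad Psi = q Phi ^ (q - 1) grad Phi;
   this gives the drift bound, and the two-sided bound is monotonicity of u ^ q.
   At the minimiser, Psi h = O(|h| ^ (2 q)) with 2 q > 1, so the differential
   vanishes there.
   For the descent inequality put t = Phi y, s = Phi x, G = <grad Phi y, x - y>
   and n = |x - y|.  Smoothness gives s <= t + G + L n^2 / 2 and, as Phi >= 0,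
   |grad Phi y|^2 <= 2 L t.  If n <= |y| then t >= c1 n^2, and the tangent-line
   bound of the concave map u ^ q leaves the remainder q t ^ (q - 1) L n^2 / 2,
   which is O(n ^ (2 q)).  If n > |y| then t <= c2 n^2, hence s = O(n^2), and
   q t ^ (q - 1) |G| <= q sqrt(2 L) t ^ (q - 1/2) n = O(n ^ (2 q)) because
   q > 1/2. *)

Section Dotp.
Variables (R : realType) (d : nat).
Implicit Types u v w : 'rV[R]_d.

Lemma dotpC u v : dotp u v = dotp v u.
Proof. by apply: eq_bigr => i _; rewrite mulrC. Qed.

Lemma dotpZl a u v : dotp (a *: u) v = a * dotp u v.
Proof. by rewrite /dotp mulr_sumr; apply: eq_bigr => i _; rewrite mxE mulrA. Qed.

Lemma dotpZr a u v : dotp u (a *: v) = a * dotp u v.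
Proof. by rewrite dotpC dotpZl dotpC. Qed.

Lemma dotpNl u v : dotp (- u) v = - dotp u v.
Proof. by rewrite -scaleN1r dotpZl mulN1r. Qed.

Lemma dotpNr u v : dotp u (- v) = - dotp u v.
Proof. by rewrite dotpC dotpNl dotpC. Qed.

Lemma dotpDl u v w : dotp (u + v) w = dotp u w + dotp v w.
Proof. by rewrite /dotp -big_split; apply: eq_bigr => i _; rewrite mxE mulrDl. Qed.

Lemma dotpDr u v w : dotp u (v + w) = dotp u v + dotp u w.
Proof. by rewrite dotpC dotpDl !(dotpC u). Qed.

Lemma dotp0r u : dotp u 0 = 0.
Proof. by rewrite -(scale0r 0) dotpZr mul0r. Qed.

Lemma dotp0l u : dotp 0 u = 0.
Proof. by rewrite dotpC dotp0r. Qed.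

Lemma dotpp_ge0 u : 0 <= dotp u u.
Proof. by apply: sumr_ge0 => i _; rewrite -expr2 sqr_ge0. Qed.

Lemma dotpp_eq0 u : (dotp u u == 0) = (u == 0).
Proof.
apply/idP/eqP => [|->]; last by rewrite dotp0l.
rewrite psumr_eq0 => [/allP u0|i _]; last by rewrite -expr2 sqr_ge0.
apply/rowP => i; rewrite mxE.
by have := u0 i (mem_index_enum _); rewrite /= mulf_eq0 orbb => /eqP.
Qed.

Lemma enorm_ge0 u : 0 <= enorm u.
Proof. exact: sqrtr_ge0. Qed.

Lemma enorm_sqr u : enorm u ^+ 2 = dotp u u.
Proof. by rewrite sqr_sqrtr // dotpp_ge0. Qed.

Lemma enorm_eq0 u : (enorm u == 0) = (u == 0).
Proof. by rewrite -sqrf_eq0 enorm_sqr dotpp_eq0. Qed.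

Lemma enorm0 : enorm (0 : 'rV[R]_d) = 0.
Proof. by apply/eqP; rewrite enorm_eq0. Qed.

Lemma enormN u : enorm (- u) = enorm u.
Proof. by rewrite /enorm dotpNl dotpNr opprK. Qed.

Lemma dotp_le u v : dotp u v <= enorm u * enorm v.
Proof.
have [->|u0] := eqVneq u 0; first by rewrite dotp0l enorm0 mul0r.
have [->|v0] := eqVneq v 0; first by rewrite dotp0r enorm0 mulr0.
have a0 : 0 < enorm u by rewrite lt_def enorm_eq0 u0 enorm_ge0.
have b0 : 0 < enorm v by rewrite lt_def enorm_eq0 v0 enorm_ge0.
have := dotpp_ge0 (enorm v *: u - enorm u *: v).
rewrite dotpDl !dotpDr !dotpNl !dotpNr !dotpZl !dotpZr -!enorm_sqr (dotpC v u) => h.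
rewrite -(ler_pM2l (mulr_gt0 a0 b0)).
move: a0 b0 h; set a := enorm u; set b := enorm v; nra.
Qed.

Lemma ler_norm_dotp u v : `|dotp u v| <= enorm u * enorm v.
Proof. by rewrite ler_norml dotp_le andbT -(enormN u) lerNl -dotpNl dotp_le. Qed.

Lemma sqr_enorm_le_mx_norm u : enorm u ^+ 2 <= d%:R * `|u| ^+ 2.
Proof.
rewrite enorm_sqr /dotp mulr_natl -[X in _ *+ X]card_ord -sumr_const.
apply: ler_sum => i _; rewrite -expr2 -real_normK ?num_real //.
rewrite lerXn2r ?nnegrE ?normr_ge0 // [leRHS]mx_normrE.
exact: (le_bigmax _ (fun ij : 'I_1 * 'I_d => `|u ij.1 ij.2|) (ord0, i)).
Qed.

(* Minimising the quadratic upper bound at [z = y - L^-1 g] and using [0 <= f z]. *)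
Lemma sqr_enorm_le_descent (f : 'rV[R]_d -> R) y g L : 0 < L ->
  (forall z, 0 <= f z) ->
  (forall z, f z <= f y + dotp g (z - y) + L / 2 * enorm (z - y) ^+ 2) ->
  enorm g ^+ 2 <= 2 * L * f y.
Proof.
move=> L0 f_ge0 f_le.
have := le_trans (f_ge0 (y - L^-1 *: g)) (f_le _).
rewrite (addrC y) addrK enorm_sqr dotpNl !dotpNr dotpZl !dotpZr opprK -enorm_sqr.
have -> : forall a, f y + - (L^-1 * a) + L / 2 * (L^-1 * (L^-1 * a))
                    = f y - a / (2 * L) by move=> a; field; rewrite gt_eqF.
by rewrite subr_ge0 ler_pdivrMr ?mulr_gt0 // mulrC.
Qed.

End Dotp.

Section RealPower.
Variable R : realType.
Implicit Types a b c e g n q r s t u G L : R.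

Lemma powR_sqr a r : 0 <= a -> (a ^+ 2) `^ r = a `^ (2 * r).
Proof. by move=> a0; rewrite -powR_mulrn // -powRrM. Qed.

Lemma le0_ger_powR r a b : r <= 0 -> 0 < a -> a <= b -> b `^ r <= a `^ r.
Proof.
move=> r0 a0 ab; have b0 := lt_le_trans a0 ab.
rewrite -[r]opprK !(powRN _ (- r)) lef_pV2 ?posrE ?powR_gt0 //.
by apply: ge0_ler_powR; rewrite ?nnegrE ?oppr_ge0 // ltW.
Qed.

(* Young's inequality with exponents [1/q] and [1/(1-q)], applied to [u ^ q] and [1]. *)
Lemma powR_le_tangent1 q u : 0 < q <= 1 -> 0 <= u -> u `^ q <= 1 + q * (u - 1).
Proof.
move=> /andP[q0 q1] u0.
have [->|q_neq1] := eqVneq q 1; first by rewrite powRr1 // mul1r addrC subrK.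
have q_lt1 : q < 1 by rewrite lt_neqAle q_neq1.
have := @conjugate_powR R (u `^ q) 1 q^-1 (1 - q)^-1 (powR_ge0 _ _) ler01.
rewrite !invr_gt0 q0 subr_gt0 q_lt1 !invrK -powRrM mulfV ?gt_eqF // powRr1 //.
rewrite powR1 mulr1 => /(_ isT isT (subrKC _ _)) /le_trans; apply; lra.
Qed.

Lemma powR_le_tangent q s t : 0 < q <= 1 -> 0 <= s -> 0 < t ->
  s `^ q <= t `^ q + q * t `^ (q - 1) * (s - t).
Proof.
move=> q01 s0 t0.
have -> : t `^ q + q * t `^ (q - 1) * (s - t) = t `^ q * (1 + q * (s / t - 1)).
  by rewrite -(mulr_powRB1 (ltW t0) (andP q01).1); field; rewrite gt_eqF.
have st0 : 0 <= s / t by rewrite divr_ge0 // ltW.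
rewrite -[s in s `^ q](divfK (lt0r_neq0 t0)) powRM // ?(ltW t0) // mulrC.
by rewrite ler_pM2l ?powR_gt0 // powR_le_tangent1.
Qed.

Lemma powR_descent_near q c L t s G n : 0 < q <= 1 -> 0 < c -> 0 <= L ->
  0 < t -> 0 <= s -> 0 <= n -> c * n ^+ 2 <= t -> s <= t + G + L / 2 * n ^+ 2 ->
  s `^ q <= t `^ q + q * t `^ (q - 1) * G + q * c `^ (q - 1) * (L / 2) * n `^ (2 * q).
Proof.
move=> q01 c0 L0 t0 s0 n0 cn_le_t s_le.
have [q0 q1] := andP q01.
have tn : t `^ (q - 1) * n ^+ 2 <= c `^ (q - 1) * n `^ (2 * q).
  have [->|n_neq0] := eqVneq n 0.
    by rewrite expr0n mulr0 mulr_ge0 ?powR_ge0.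
  have n_gt0 : 0 < n by rewrite lt_def n_neq0.
  have q1_le0 : q - 1 <= 0 by rewrite subr_le0.
  have := le0_ger_powR q1_le0 (mulr_gt0 c0 (exprn_gt0 2 n_gt0)) cn_le_t.
  rewrite powRM ?sqr_ge0 ?(ltW c0) // powR_sqr ?(ltW n_gt0) // => tc.
  have -> : n `^ (2 * q) = n `^ (2 * (q - 1)) * n ^+ 2.
    by rewrite -powR_mulrn // -powRD ?lt0r_neq0 ?implybT //; congr (_ `^ _); ring.
  by rewrite mulrA ler_wpM2r ?sqr_ge0.
apply: (le_trans (powR_le_tangent q01 s0 t0)); rewrite -addrA lerD2l.
have k0 : 0 <= q * t `^ (q - 1) by rewrite mulr_ge0 ?powR_ge0 // ltW.
apply: le_trans (ler_wpM2l k0 (_ : s - t <= G + L / 2 * n ^+ 2)) _; first lra.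
rewrite mulrDr lerD2l.
have -> : q * t `^ (q - 1) * (L / 2 * n ^+ 2) = q * (L / 2) * (t `^ (q - 1) * n ^+ 2).
  by ring.
have -> : q * c `^ (q - 1) * (L / 2) * n `^ (2 * q)
          = q * (L / 2) * (c `^ (q - 1) * n `^ (2 * q)) by ring.
by rewrite ler_wpM2l // mulr_ge0 ?divr_ge0 // ltW.
Qed.

Lemma powR_cross_term_le q c L t G g n : 2^-1 < q -> 0 <= c -> 0 <= L ->
  0 < t -> 0 <= g -> 0 <= n -> t <= c * n ^+ 2 -> g ^+ 2 <= 2 * L * t ->
  `|G| <= g * n ->
  - (q * t `^ (q - 1) * G) <= q * Num.sqrt (2 * L) * c `^ (q - 2^-1) * n `^ (2 * q).
Proof.
move=> q12 c0 L0 t0 g0 n0 t_le g_le G_le.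
have q0 : 0 < q by apply: lt_trans q12; rewrite invr_gt0.
have g_le_t : g <= Num.sqrt (2 * L) * t `^ 2^-1.
  rewrite powR12_sqrt ?(ltW t0) // -sqrtrM ?mulr_ge0 // -(ger0_norm g0) -sqrtr_sqr.
  by rewrite ler_sqrt // !mulr_ge0 // ltW.
have t_pow : t `^ (q - 1) * t `^ 2^-1 = t `^ (q - 2^-1).
  by rewrite -powRD ?lt0r_neq0 ?implybT //; congr (_ `^ _); lra.
have t_pow_le : t `^ (q - 2^-1) <= c `^ (q - 2^-1) * n `^ (2 * (q - 2^-1)).
  rewrite -powR_sqr // -powRM ?sqr_ge0 //.
  apply: ge0_ler_powR; rewrite ?nnegrE ?mulr_ge0 ?sqr_ge0 ?(ltW t0) //.
  by rewrite subr_ge0 ltW.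
have n_pow : n `^ (2 * (q - 2^-1)) * n = n `^ (2 * q).
  rewrite -{2}(powRr1 n0) -powRD; last by apply/implyP => /eqP; lra.
  by congr (_ `^ _); lra.
have k0 : 0 <= q * t `^ (q - 1) by rewrite mulr_ge0 ?powR_ge0 // ltW.
have NG_le : - G <= g * n by rewrite (le_trans _ G_le) // -normrN ler_norm.
rewrite -mulrN; apply: le_trans (ler_wpM2l k0 NG_le) _.
apply: le_trans (ler_wpM2l k0 (ler_wpM2r n0 g_le_t)) _.
rewrite -n_pow [leRHS]mulrA [leLHS]mulrA ler_wpM2r //.
have -> : q * t `^ (q - 1) * (Num.sqrt (2 * L) * t `^ 2^-1)
          = q * Num.sqrt (2 * L) * t `^ (q - 2^-1) by rewrite -t_pow; ring.
by rewrite -[leRHS]mulrA ler_wpM2l // mulr_ge0 ?sqrtr_ge0 // ltW.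
Qed.

Lemma powR_descent_far q c L t s G g n : 2^-1 < q <= 1 -> 0 <= c -> 0 <= L ->
  0 < t -> 0 <= s -> 0 <= g -> 0 <= n -> t <= c * n ^+ 2 -> g ^+ 2 <= 2 * L * t ->
  `|G| <= g * n -> s <= t + G + L / 2 * n ^+ 2 ->
  s `^ q <= t `^ q + q * t `^ (q - 1) * G
            + ((c + Num.sqrt (2 * L * c) + L / 2) `^ q
               + q * Num.sqrt (2 * L) * c `^ (q - 2^-1)) * n `^ (2 * q).
Proof.
move=> /andP[q12 q1] c0 L0 t0 s0 g0 n0 t_le g_le G_le s_le.
have q0 : 0 < q by apply: lt_trans q12; rewrite invr_gt0.
set K := c + Num.sqrt (2 * L * c) + L / 2.
have K0 : 0 <= K by rewrite !addr_ge0 ?sqrtr_ge0 ?divr_ge0.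
have g_le_n : g <= Num.sqrt (2 * L * c) * n.
  rewrite -(ger0_norm g0) -sqrtr_sqr -[n]ger0_norm // -sqrtr_sqr -sqrtrM ?mulr_ge0 //.
  rewrite ler_sqrt ?mulr_ge0 ?sqr_ge0 // (le_trans g_le) // -[_ * c * _]mulrA.
  by rewrite ler_wpM2l ?mulr_ge0.
have s_le_K : s <= K * n ^+ 2.
  have gn : g * n <= Num.sqrt (2 * L * c) * n ^+ 2 by rewrite expr2 mulrA ler_wpM2r.
  have := ler_norm G.
  rewrite /K; move: gn; set S := Num.sqrt _; lra.
have sq_le : s `^ q <= K `^ q * n `^ (2 * q).
  rewrite -powR_sqr // -powRM ?sqr_ge0 //.
  by apply: ge0_ler_powR; rewrite ?nnegrE ?mulr_ge0 ?sqr_ge0 // ltW.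
have := powR_cross_term_le q12 c0 L0 t0 g0 n0 t_le g_le G_le.
have := powR_ge0 t q; lra.
Qed.

Definition powR_descent_const q c1 c2 L :=
  q * c1 `^ (q - 1) * (L / 2) + (c2 + Num.sqrt (2 * L * c2) + L / 2) `^ q
  + q * Num.sqrt (2 * L) * c2 `^ (q - 2^-1).

Lemma powR_le_descent_const q c1 c2 L : 0 < q -> 0 < c1 -> 0 <= c2 -> 0 <= L ->
  c2 `^ q <= powR_descent_const q c1 c2 L.
Proof.
move=> q0 c10 c20 L0; rewrite /powR_descent_const.
have c2_le : c2 `^ q <= (c2 + Num.sqrt (2 * L * c2) + L / 2) `^ q.
  apply: ge0_ler_powR; rewrite ?nnegrE ?addr_ge0 ?sqrtr_ge0 ?divr_ge0 ?(ltW q0) //.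
  by rewrite -addrA lerDl addr_ge0 ?sqrtr_ge0 ?divr_ge0.
have near0 : 0 <= q * c1 `^ (q - 1) * (L / 2).
  by rewrite !mulr_ge0 ?powR_ge0 ?divr_ge0 // ltW.
have far0 : 0 <= q * Num.sqrt (2 * L) * c2 `^ (q - 2^-1).
  by rewrite !mulr_ge0 ?sqrtr_ge0 ?powR_ge0 // ltW.
lra.
Qed.

Lemma powR_descent q c1 c2 L t s G e g n : 2^-1 < q <= 1 -> 0 < c1 -> 0 <= c2 ->
  0 <= L -> 0 < t -> 0 <= s -> 0 <= e -> 0 <= g -> 0 <= n ->
  c1 * e ^+ 2 <= t -> t <= c2 * e ^+ 2 -> g ^+ 2 <= 2 * L * t -> `|G| <= g * n ->
  s <= t + G + L / 2 * n ^+ 2 ->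
  s `^ q <= t `^ q + q * t `^ (q - 1) * G + powR_descent_const q c1 c2 L * n `^ (2 * q).
Proof.
move=> q1 c10 c20 L0 t0 s0 e0 g0 n0 c1e_le_t t_le_c2e g_le G_le s_le.
have [q12 q_le1] := andP q1.
have q0 : 0 < q by apply: lt_trans q12; rewrite invr_gt0.
have P0 : 0 <= n `^ (2 * q) := powR_ge0 _ _.
have near0 : 0 <= q * c1 `^ (q - 1) * (L / 2).
  by rewrite !mulr_ge0 ?powR_ge0 ?divr_ge0 // ltW.
have far0 : 0 <= (c2 + Num.sqrt (2 * L * c2) + L / 2) `^ q
                 + q * Num.sqrt (2 * L) * c2 `^ (q - 2^-1).
  by rewrite addr_ge0 ?powR_ge0 // !mulr_ge0 ?sqrtr_ge0 ?powR_ge0 // ltW.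
rewrite /powR_descent_const; have [n_le_e|e_lt_n] := leP n e.
- have c1n_le_t : c1 * n ^+ 2 <= t.
    by rewrite (le_trans _ c1e_le_t) // ler_wpM2l ?(ltW c10) // lerXn2r ?nnegrE.
  have q01 : 0 < q <= 1 by rewrite q0.
  have := powR_descent_near q01 c10 L0 t0 s0 n0 c1n_le_t s_le.
  have := mulr_ge0 far0 P0; lra.
- have t_le_c2n : t <= c2 * n ^+ 2.
    by rewrite (le_trans t_le_c2e) // ler_wpM2l // lerXn2r ?nnegrE // ltW.
  have := powR_descent_far q1 c20 L0 t0 s0 g0 n0 t_le_c2n g_le G_le s_le.
  have := mulr_ge0 near0 P0; lra.
Qed.

End RealPower.

Section PowRDiff.
Variables (R : realType) (V : normedModType R).

Lemma diff0_powR_bounded (f : V -> R) C r : 1 < r ->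
  (forall h, `|f h| <= C * `|h| `^ r) ->
  differentiable f 0 /\ 'd f 0 = \0 :> (V -> R).
Proof.
move=> r1 f_le.
have r0 : r != 0 by rewrite gt_eqF // (lt_trans ltr01 r1).
have f0 : f 0 = 0.
  apply/normr0_eq0/le_anti; rewrite normr_ge0 andbT (le_trans (f_le 0)) //.
  by rewrite normr0 powR0 // mulr0.
have f_o : f \o shift 0 = cst (f 0) + \0 +o_ 0 id.
  apply/eqaddoP => eps eps0.
  set C' := `|C| + 1; have C'0 : 0 < C' by rewrite ltr_wpDl.
  have e0 : 0 < eps / C' by rewrite divr_gt0.
  have r10 : 0 < r - 1 by rewrite subr_gt0.
  set del := (eps / C') `^ (r - 1)^-1.
  have del0 : 0 < del by rewrite powR_gt0.
  apply: filterS (nbhs0_lt del0) => h h_lt.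
  have -> : (f \o shift 0 - (cst (f 0) + \0)) h = f h.
    by rewrite !fctE /= addr0 f0 addr0 subr0.
  have m0 := normr_ge0 h.
  have hr : `|h| `^ r = `|h| `^ (r - 1) * `|h|.
    by rewrite -{3}(powRr1 m0) -powRD subrK // (negPf r0).
  have h_le : `|h| `^ (r - 1) <= eps / C'.
    have <- : del `^ (r - 1) = eps / C'.
      by rewrite -powRrM mulVf ?lt0r_neq0 // powRr1 // ltW.
    by apply: (ge0_ler_powR (ltW r10)); rewrite ?nnegrE ?powR_ge0 // ltW.
  apply: (le_trans (f_le h)); rewrite hr mulrA ler_wpM2r //.
  apply: (@le_trans _ _ (C' * `|h| `^ (r - 1))).
    by rewrite ler_wpM2r ?powR_ge0 // (le_trans (ler_norm C)) // lerDl.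
  by rewrite -ler_pdivlMl // mulrC.
have [cont0 _] := dcst (0 : R) (0 : V).
have df0 : 'd f 0 = \0 :> (V -> R) by apply: diff_unique.
by split => //; apply/diff_locallyP; rewrite df0.
Qed.

Lemma differentiable_powR q (a : R) : 0 < a -> differentiable (@powR R ^~ q) a.
Proof. by move=> a0; apply/derivable1_diffP/derivable_powR; rewrite in_itv /= a0. Qed.

Lemma differentiable_powR_comp (f : V -> R) q x : 0 < f x -> differentiable f x ->
  differentiable (fun y => f y `^ q) x.
Proof.
move=> fx0 df; rewrite -[fun y => _]/((@powR R ^~ q) \o f).
by apply: differentiable_comp => //; apply: differentiable_powR.
Qed.

Lemma diff_powR_comp (f : V -> R) q x : 0 < f x -> differentiable f x ->
  forall v, 'd (fun y => f y `^ q) x v = q * f x `^ (q - 1) * 'd f x v.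
Proof.
move=> fx0 df v; rewrite -[fun y => _]/((@powR R ^~ q) \o f).
have dp := differentiable_powR q fx0.
rewrite diff_comp //= diff1E // powR_derive1; first exact: mulrC.
by rewrite in_itv /= fx0.
Qed.

End PowRDiff.

Section PowerOfLyapunov.
Variables (R : realType) (d : nat) (Phi : 'rV[R]_d -> R) (c1 c2 L q : R).
Hypothesis Phi_ge0 : forall z, 0 <= Phi z.
Hypothesis Phi_diff : forall z, differentiable Phi z.
Hypothesis c1_gt0 : 0 < c1.
Hypothesis c2_ge0 : 0 <= c2.
Hypothesis L_gt0 : 0 < L.
Hypothesis Phi_quad : forall z, c1 * enorm z ^+ 2 <= Phi z /\ Phi z <= c2 * enorm z ^+ 2.
Hypothesis Phi_smooth : forall y z,
  Phi z <= Phi y + dotp (grad Phi y) (z - y) + L / 2 * enorm (z - y) ^+ 2.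
Hypothesis q_gt12 : 2^-1 < q.
Hypothesis q_le1 : q <= 1.

Local Notation Psi := (fun z => Phi z `^ q).

Let q_gt0 : 0 < q. Proof. by apply: lt_trans q_gt12; rewrite invr_gt0. Qed.

Lemma Phi_eq0 z : (Phi z == 0) = (z == 0).
Proof.
apply/eqP/eqP => [Phiz0|->]; last first.
  by apply/le_anti; rewrite Phi_ge0 andbT (le_trans (Phi_quad 0).2) // enorm0 expr0n mulr0.
apply/eqP; rewrite -enorm_eq0 -sqrf_eq0 eq_le sqr_ge0 andbT.
by rewrite -(pmulr_rle0 _ c1_gt0) -Phiz0 (Phi_quad z).1.
Qed.

Lemma Phi0 : Phi 0 = 0.
Proof. by apply/eqP; rewrite Phi_eq0. Qed.

Lemma Phi_gt0 z : z != 0 -> 0 < Phi z.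
Proof. by move=> z0; rewrite lt_def Phi_eq0 z0 Phi_ge0. Qed.

Lemma Psi_sandwich z :
  c1 `^ q * enorm z `^ (2 * q) <= Phi z `^ q /\ Phi z `^ q <= c2 `^ q * enorm z `^ (2 * q).
Proof.
have [lo hi] := Phi_quad z; have e0 := enorm_ge0 z.
have c10 := ltW c1_gt0; have q0 : 0 <= q by apply: ltW.
rewrite -!powR_sqr // -!powRM ?sqr_ge0 //.
by split; apply: ge0_ler_powR; rewrite ?nnegrE ?mulr_ge0 ?sqr_ge0.
Qed.

Lemma diff_Psi0 : differentiable Psi 0 /\ 'd Psi 0 = \0 :> ('rV[R]_d -> R).
Proof.
apply: (@diff0_powR_bounded _ _ _ ((c2 * d%:R) `^ q) (2 * q)).
  by rewrite -ltr_pdivrMl // mulr1.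
move=> h; have cd0 : 0 <= c2 * d%:R by rewrite mulr_ge0.
rewrite ger0_norm ?powR_ge0 // -powR_sqr // -powRM ?sqr_ge0 //.
apply: ge0_ler_powR; rewrite ?nnegrE ?mulr_ge0 ?sqr_ge0 // ?(ltW q_gt0) //.
by rewrite (le_trans (Phi_quad h).2) // -mulrA ler_wpM2l // sqr_enorm_le_mx_norm.
Qed.

Lemma differentiable_Psi x : differentiable Psi x.
Proof.
have [->|x_neq0] := eqVneq x 0; first exact: diff_Psi0.1.
by apply: differentiable_powR_comp; [exact: Phi_gt0 | exact: Phi_diff].
Qed.

Lemma grad_Psi0 : grad Psi 0 = 0.
Proof. by apply/rowP => i; rewrite !mxE diff_Psi0.2. Qed.

Lemma grad_Psi y : y != 0 -> grad Psi y = (q * Phi y `^ (q - 1)) *: grad Phi y.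
Proof.
by move=> y0; apply/rowP => i; rewrite !mxE diff_powR_comp ?Phi_gt0.
Qed.

Lemma dotp_grad_Psi_le eta z v : dotp (grad Phi z) v <= - eta * Phi z ->
  dotp (grad Psi z) v <= - (q * eta) * Phi z `^ q.
Proof.
have [->|z_neq0 drift] := eqVneq z 0.
  by rewrite grad_Psi0 dotp0l Phi0 powR0 ?mulr0 // lt0r_neq0.
have k0 : 0 <= q * Phi z `^ (q - 1) by rewrite mulr_ge0 ?powR_ge0 // ltW.
rewrite grad_Psi // dotpZl; apply: le_trans (ler_wpM2l k0 drift) _.
suff -> : q * Phi z `^ (q - 1) * (- eta * Phi z) = - (q * eta) * Phi z `^ q by [].
by rewrite -(mulr_powRB1 (Phi_ge0 z) q_gt0); ring.
Qed.

Lemma Psi_descent x y : Phi x `^ q <= Phi y `^ q + dotp (grad Psi y) (x - y)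
  + powR_descent_const q c1 c2 L * enorm (x - y) `^ (2 * q).
Proof.
have q1 : 2^-1 < q <= 1 by rewrite q_gt12.
have [->|y_neq0] := eqVneq y 0.
  rewrite grad_Psi0 dotp0l Phi0 powR0 ?lt0r_neq0 // !add0r subr0.
  apply: le_trans (Psi_sandwich x).2 _.
  by apply: ler_wpM2r; rewrite ?powR_ge0 // powR_le_descent_const // ltW.
have [lo hi] := Phi_quad y.
rewrite grad_Psi // dotpZl.
apply: (powR_descent q1 c1_gt0 c2_ge0 (ltW L_gt0) (Phi_gt0 y_neq0) (Phi_ge0 x)
  (enorm_ge0 y) (enorm_ge0 _) (enorm_ge0 _) lo hi _ (ler_norm_dotp _ _) (Phi_smooth y x)).
exact: sqr_enorm_le_descent.
Qed.

End PowerOfLyapunov.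

Theorem proposition2 (R : realType) (d : nat)
  (H : 'rV[R]_d -> 'rV[R]_d) (xstar : 'rV[R]_d) (Phi : 'rV[R]_d -> R)
  (eta c1 c2 L2 p : R) :
  H xstar = xstar ->
  (forall x, 0 <= Phi x) ->
  (forall x, differentiable Phi x) ->
  0 < eta -> 0 < c1 -> 0 < c2 -> 0 < L2 ->
  (forall x, dotp (grad Phi (x - xstar)) (H x - x) <= - eta * Phi (x - xstar)) ->
  (forall x y, Phi y <= Phi x + dotp (grad Phi x) (y - x)
                        + L2 / 2 * enorm (y - x) ^+ 2) ->
  (forall x, c1 * enorm (x - xstar) ^+ 2 <= Phi (x - xstar)
             /\ Phi (x - xstar) <= c2 * enorm (x - xstar) ^+ 2) ->
  1 < p -> p <= 2 ->
  let Psi := fun x => Phi x `^ (p / 2) in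
  let a1 := c1 `^ (p / 2) in
  let a2 := c2 `^ (p / 2) in
  (forall x, differentiable Psi x) /\ grad Psi 0 = 0 /\
  exists eta_p L_p : R,
    [/\ 0 < eta_p, 0 < L_p, eta_p = p / 2 * eta &
    forall x y,
      [/\ a1 * enorm (x - xstar) `^ p <= Psi (x - xstar)
          /\ Psi (x - xstar) <= a2 * enorm (x - xstar) `^ p,
        dotp (grad Psi (x - xstar)) (H x - x) <= - eta_p * Psi (x - xstar) &
        Psi x <= Psi y + dotp (grad Psi y) (x - y) + L_p / p * enorm (x - y) `^ p]].
Proof.
move=> _ Phi_ge0 Phi_diff eta_gt0 c1_gt0 c2_gt0 L2_gt0 drift smooth quad p_gt1 p_le2.
move=> Psi a1 a2; rewrite {}/Psi {}/a1 {}/a2.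
have q_gt12 : 2^-1 < p / 2 by lra.
have q_le1 : p / 2 <= 1 by lra.
have p_gt0 : 0 < p by lra.
have c2_ge0 := ltW c2_gt0.
have quad0 z : c1 * enorm z ^+ 2 <= Phi z /\ Phi z <= c2 * enorm z ^+ 2.
  by have := quad (z + xstar); rewrite addrK.
have enormp z : enorm z `^ p = enorm z `^ (2 * (p / 2)) by rewrite mulrC divfK.
split; first by move=> x; apply: (differentiable_Psi (c1 := c1) (c2 := c2)).
split; first exact: (grad_Psi0 (c2 := c2)).
set C := powR_descent_const (p / 2) c1 c2 L2.
have C_gt0 : 0 < C.
  by apply: lt_le_trans (powR_gt0 _ c2_gt0) (powR_le_descent_const _ _ _ _); lra.
exists (p / 2 * eta), (p * C); split; rewrite ?mulr_gt0 ?invr_gt0 //.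
move=> x y; rewrite [p * C]mulrC mulfK ?lt0r_neq0 // !enormp; split.
- exact: (Psi_sandwich (Phi := Phi)).
- exact: (dotp_grad_Psi_le (c1 := c1) (c2 := c2)).
- exact: Psi_descent.
Qed.
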